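(* Let $m,n\ge1$ be integers, $A=(a_{ij})$ an $n\times m$ real matrix and $q_{\max}>1$. Run the Iterated LLL-algorithm (ILLL) on $A$ and $q_{\max}$, producing for each integer $k$ with $1\le k\le k'$ a vector $q(k)=(q_1(k),\dots,q_m(k))\in\mathbb Z^m$. Then for every such $k$, $$\max_j|q_j(k)|\le 2^{\frac{(m+n-1)(m+n)}{4m}}\,2^{\frac{kn}{m}}\quad\text{and}\quad \max_i\|q_1(k)a_{i1}+\dots+q_m(k)a_{im}\|\le 2^{-k}.$$
   Context: $\|x\|$ denotes the distance from $x\in\mathbb R$ to the nearest integer. A basis $b_1,\dots,b_r$ of $\mathbb R^r$ with Gram–Schmidt vectors $b_i^*=b_i-\sum_{j<i}\mu_{ij}b_j^*$, $\mu_{ij}=(b_i,b_j^* )/(b_j^*,b_j^* )$, is reduced if $|\mu_{ij}|\le\frac12$ ($j<i$) and $|b_i^*+\mu_{i,i-1}b_{i-1}^*|^2\ge\frac34|b_{i-1}^*|^2$ ($1<i\le r$); the LLL-algorithm returns a reduced basis of the lattice generated by its input basis. The ILLL-algorithm: put $k'=\left\lceil -\frac{(m+n-1)(m+n)}{4n}+\frac{m\log_2 q_{\max}}{n}\right\rceil$ and, for $k\ge1$, $c(k)=\left(2^{-\frac{m+n+3}{4}-k+1}\right)^{\frac{m+n}{m}}$. Start with the basis given by the columns of $B=\begin{pmatrix} I_n & A\\ 0& c(1)I_m\end{pmatrix}$. In iteration $k=1,\dots,k'$: apply the LLL-algorithm to the current basis; from the first vector of the reduced basis, which has the form $(q_1a_{11}+\dots+q_ma_{1m}-p_1,\dots,q_1a_{n1}+\dots+q_ma_{nm}-p_n,c(k)q_1,\dots,c(k)q_m)^T$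 with $p_i,q_j\in\mathbb Z$, output $q(k)=(q_1,\dots,q_m)$; then divide the last $m$ coordinates of all basis vectors by $2^{\frac{m+n}{m}}$ (so the lattice in iteration $k$ is the one generated by the columns of $B$ with $c(1)$ replaced by $c(k)$). *)

From HB Require Import structures.
From mathcomp Require Import all_boot all_order all_algebra.
From mathcomp Require Import reals exp.
Set Implicit Arguments. Unset Strict Implicit. Unset Printing Implicit Defensive.
Import Order.TTheory GRing.Theory Num.Theory.
Local Open Scope ring_scope.

Section ILLL.
Variable R : realType.

Definition dist_int (x : R) : R :=
  Num.min (x - (Num.floor x)%:~R) ((Num.ceil x)%:~R - x).

Definition dotv (r : nat) (u v : 'cV[R]_r) : R := \sum_(i < r) u i 0 * v i 0.
Definition norm2 (r : nat) (u : 'cV[R]_r) : R := dotv u u.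

(* the i-th column (0-indexed, nat index) of a square matrix; 0 if i >= r.
   A basis b_1,...,b_r is represented by the matrix M whose columns are
   b_1,...,b_r, so b_{i+1} = colN M i. *)
Definition colN (r : nat) (M : 'M[R]_r) (i : nat) : 'cV[R]_r :=
  \col_k (oapp (fun j : 'I_r => M k j) 0 (insub i)).

(* Gram-Schmidt: gs_seq M i = [:: b_1^*; ...; b_i^*] *)
Fixpoint gs_seq (r : nat) (M : 'M[R]_r) (i : nat) : seq 'cV[R]_r :=
  match i with
  | 0 => [::]
  | i'.+1 =>
      let s := gs_seq M i' in
      rcons s (colN M i' -
        \sum_(j < i') (dotv (colN M i') (nth 0 s j) / norm2 (nth 0 s j))
                        *: nth 0 s j)
  end.

Definition gs (r : nat) (M : 'M[R]_r) (i : nat) : 'cV[R]_r :=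
  nth 0 (gs_seq M i.+1) i.

Definition gs_mu (r : nat) (M : 'M[R]_r) (i j : nat) : R :=
  dotv (colN M i) (gs M j) / norm2 (gs M j).

Definition is_basis (r : nat) (M : 'M[R]_r) : Prop :=
  forall c : 'I_r -> R, \sum_(i < r) c i *: col i M = 0 -> forall i, c i = 0.

(* LLL-reduced (0-indexed version of the definition in the paper) *)
Definition reduced (r : nat) (M : 'M[R]_r) : Prop :=
  (forall i j : nat, (j < i < r)%N -> `|gs_mu M i j| <= 1 / 2) /\
  (forall i : nat, (0 < i < r)%N ->
     norm2 (gs M i + gs_mu M i i.-1 *: gs M i.-1) >= 3 / 4 * norm2 (gs M i.-1)).

Definition in_lattice (r : nat) (M : 'M[R]_r) (x : 'cV[R]_r) : Prop :=
  exists z : 'I_r -> int, x = \sum_(i < r) (z i)%:~R *: col i M.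

Definition same_lattice (r : nat) (M N : 'M[R]_r) : Prop :=
  forall x, in_lattice M x <-> in_lattice N x.

Definition log2 (x : R) : R := ln x / ln 2.

Definition kprime (m n : nat) (qmax : R) : int :=
  Num.ceil (- (((m + n - 1) * (m + n))%:R / (4 * n%:R))
            + m%:R * log2 qmax / n%:R).

Definition cILLL (m n k : nat) : R :=
  powR (powR 2 (- ((m + n + 3)%:R / 4) - k%:R + 1)) ((m + n)%:R / m%:R).

(* the matrix B = [[I_n, A], [0, c I_m]] whose columns generate the lattice
   of iteration k *)
Definition BILLL (m n : nat) (A : 'M[R]_(n, m)) (c : R) : 'M[R]_(n + m) :=
  block_mx 1%:M A 0 (c%:M).

End ILLL.

From HB Require Import structures.
From mathcomp Require Import all_boot all_order all_algebra.
From mathcomp Require Import reals exp.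
From mathcomp Require Import ring lra.
Set Implicit Arguments. Unset Strict Implicit. Unset Printing Implicit Defensive.
Import Order.TTheory GRing.Theory Num.Theory.
Local Open Scope ring_scope.

(* Writing B = G U with G the Gram-Schmidt matrix and U unitriangular gives
   det(B)^2 = prod |b_i^*|^2, and the Lovasz condition of a reduced basis gives
   |b_1|^2 <= 2^i |b_{i+1}^*|^2, hence |b_1|^(2r) <= 2^(r(r-1)/2) det(B)^2.
   Bases of the same lattice have the same |det|, and the ILLL lattice has
   determinant c(k)^m, chosen exactly so that this bound reads |b_1| <= 2^(-k).
   Every coordinate of b_1 is then at most 2^(-k): the first n of them bound
   ||q_1 a_i1 + ... + q_m a_im||, the last m bound c(k) |q_j|. *)

Section InnerProduct.
Variables (R : realType) (r : nat).
Implicit Types u v w : 'cV[R]_r.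

Lemma dotvC u v : dotv u v = dotv v u.
Proof. by apply: eq_bigr => i _; rewrite mulrC. Qed.

Lemma dotvDl u v w : dotv (u + v) w = dotv u w + dotv v w.
Proof. by rewrite /dotv -big_split; apply: eq_bigr => i _ /=; rewrite mxE mulrDl. Qed.

Lemma dotvZl a u v : dotv (a *: u) v = a * dotv u v.
Proof. by rewrite /dotv mulr_sumr; apply: eq_bigr => i _; rewrite mxE mulrA. Qed.

Lemma dotvBl u v w : dotv (u - v) w = dotv u w - dotv v w.
Proof. by rewrite dotvDl -scaleN1r dotvZl mulN1r. Qed.

Lemma dotvDr u v w : dotv u (v + w) = dotv u v + dotv u w.
Proof. by rewrite dotvC dotvDl !(dotvC u). Qed.

Lemma dotvZr a u v : dotv u (a *: v) = a * dotv u v.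
Proof. by rewrite dotvC dotvZl dotvC. Qed.

Lemma dotv0l v : dotv 0 v = 0.
Proof. by rewrite /dotv big1 // => i _; rewrite mxE mul0r. Qed.

Lemma dotv0r v : dotv v 0 = 0.
Proof. by rewrite dotvC dotv0l. Qed.

Lemma dotv_suml (I : Type) (s : seq I) (P : pred I) (F : I -> 'cV[R]_r) v :
  dotv (\sum_(i <- s | P i) F i) v = \sum_(i <- s | P i) dotv (F i) v.
Proof.
exact: (big_morph (fun u => dotv u v) (fun x y => dotvDl x y v) (dotv0l v)).
Qed.

Lemma norm2_ge0 u : 0 <= norm2 u.
Proof. by apply: sumr_ge0 => i _; rewrite -expr2 sqr_ge0. Qed.

Lemma norm2_eq0 u : norm2 u = 0 -> u = 0.
Proof.
move=> u0; apply/matrixP => i j; rewrite ord1 mxE.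
have sqr_u_ge0 (l : 'I_r) : true -> 0 <= u l 0 * u l 0.
  by rewrite -expr2 sqr_ge0.
by move: (@psumr_eq0P _ _ _ _ sqr_u_ge0 u0 i isT) => /eqP; rewrite mulf_eq0 orbb => /eqP.
Qed.

Lemma sqr_coord_le_norm2 u (i : 'I_r) : u i 0 ^+ 2 <= norm2 u.
Proof.
rewrite /norm2 /dotv (bigD1 i) //= expr2 lerDl.
by apply: sumr_ge0 => j _; rewrite -expr2 sqr_ge0.
Qed.

Lemma norm_coord_le u e : 0 <= e -> norm2 u <= e ^+ 2 ->
  forall i : 'I_r, `|u i 0| <= e.
Proof.
move=> e0 ue i; rewrite -(ler_pXn2r (isT : (0 < 2)%N)) ?nnegrE ?normr_ge0 //.
by rewrite real_normK ?num_real // (le_trans (sqr_coord_le_norm2 u i)).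
Qed.

End InnerProduct.

Section GramSchmidt.
Variables (R : realType) (r : nat) (M : 'M[R]_r).

Lemma size_gs_seq i : size (gs_seq M i) = i.
Proof. by elim: i => //= i IH; rewrite size_rcons IH. Qed.

Lemma nth_gs_seq i j : (j < i)%N -> nth 0 (gs_seq M i) j = gs M j.
Proof.
elim: i j => // i IH j; rewrite ltnS leq_eqVlt => /orP [/eqP-> //|lt_ji].
by rewrite [gs_seq M i.+1]/= nth_rcons size_gs_seq lt_ji; apply: IH.
Qed.

Lemma gsE i : gs M i = colN M i - \sum_(j < i) gs_mu M i j *: gs M j.
Proof.
rewrite {1}/gs [gs_seq M i.+1]/= nth_rcons size_gs_seq ltnn eqxx.
by congr (_ - _); apply: eq_bigr => j _; rewrite /gs_mu nth_gs_seq.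
Qed.

Lemma gs0 : gs M 0 = colN M 0.
Proof. by rewrite gsE big_ord0 subr0. Qed.

Lemma gs_orth i j : (j < i)%N -> dotv (gs M i) (gs M j) = 0.
Proof.
elim/ltn_ind: i j => i IH j lt_ji.
rewrite gsE dotvBl dotv_suml (bigD1 (Ordinal lt_ji)) //= big1 ?addr0; last first.
  move=> l /eqP ne_lj; rewrite dotvZl; case: (ltngtP l j) => [lt_lj|lt_jl|e].
  - by rewrite dotvC (IH j lt_ji l lt_lj) mulr0.
  - by rewrite (IH l (ltn_ord l) j lt_jl) mulr0.
  - by case: ne_lj; apply: val_inj.
rewrite dotvZl /gs_mu -/(norm2 (gs M j)).
have [/norm2_eq0 ->|nz] := eqVneq (norm2 (gs M j)) 0.
  by rewrite /norm2 !dotv0r mulr0 subrr.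
by rewrite divfK // subrr.
Qed.

Lemma colNE (i : 'I_r) a : colN M i a 0 = M a i.
Proof. by rewrite /colN mxE; case: insubP => [j _ /val_inj -> | ] //=; rewrite ltn_ord. Qed.

Definition gs_mx : 'M[R]_r := \matrix_(a, b) gs M b a 0.

Definition gs_coef_mx : 'M[R]_r :=
  \matrix_(j, i) (if (j < i)%N then gs_mu M i j else (j == i)%:R).

Lemma gs_factorization : M = gs_mx *m gs_coef_mx.
Proof.
apply/matrixP => a i; rewrite !mxE.
have -> : M a i = gs M i a 0 + \sum_(j < i) gs_mu M i j * gs M j a 0.
  rewrite gsE -colNE [in RHS]mxE [X in _ = _ + X + _]mxE summxE.
  by under eq_bigr do rewrite mxE; rewrite subrK.
rewrite (bigID (fun j : 'I_r => (j < i)%N)) /= addrC.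
rewrite (big_ord_widen r (fun j => gs_mu M i j * gs M j a 0) (ltnW (ltn_ord i))).
congr (_ + _); last by apply: eq_bigr => j lt_ji; rewrite !mxE lt_ji mulrC.
rewrite (bigD1 i) ?ltnn //= big1 ?addr0; first by rewrite !mxE ltnn eqxx mulr1.
by move=> j /andP [le_ij ne_ji]; rewrite !mxE (negbTE le_ij) (negbTE ne_ji) mulr0.
Qed.

Lemma det_gs_coef_mx : \det gs_coef_mx = 1.
Proof.
rewrite -det_tr det_trig; first by rewrite big1 // => i _; rewrite !mxE ltnn eqxx.
apply/is_trig_mxP => i j lt_ij; rewrite !mxE ltnNge (ltnW lt_ij) /=.
by rewrite -val_eqE /= (gtn_eqF lt_ij).
Qed.

Lemma det_gram_gs_mx : \det (gs_mx^T *m gs_mx) = \prod_(i < r) norm2 (gs M i).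
Proof.
have gramE i j : (gs_mx^T *m gs_mx) i j = dotv (gs M i) (gs M j).
  by rewrite !mxE; apply: eq_bigr => l _; rewrite !mxE.
rewrite det_trig; first by apply: eq_bigr => i _; rewrite gramE.
by apply/is_trig_mxP => i j lt_ij; rewrite gramE dotvC gs_orth.
Qed.

Lemma sqr_det_gs : \det M ^+ 2 = \prod_(i < r) norm2 (gs M i).
Proof.
rewrite expr2 -{1}det_tr -det_mulmx.
have -> : M^T *m M = gs_coef_mx^T *m (gs_mx^T *m gs_mx) *m gs_coef_mx.
  by rewrite {1 2}gs_factorization trmx_mul !mulmxA.
by rewrite 2!det_mulmx det_tr det_gs_coef_mx mul1r mulr1 det_gram_gs_mx.
Qed.

Hypothesis hred : reduced M.

Lemma reduced_norm2_gs_pred i : (0 < i < r)%N ->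
  norm2 (gs M i.-1) <= 2 * norm2 (gs M i).
Proof.
case: hred => size_red lovasz i_range; have := lovasz i i_range.
have lt_pred : (i.-1 < i)%N by case/andP: i_range => i0 _; rewrite prednK.
set mu := gs_mu M i i.-1.
have mu_le : `|mu| <= 1 / 2 by apply: size_red; case/andP: i_range => _ ->; rewrite lt_pred.
have -> : norm2 (gs M i + mu *: gs M i.-1) =
          norm2 (gs M i) + mu ^+ 2 * norm2 (gs M i.-1).
  rewrite /norm2 !dotvDl !dotvDr !dotvZl !dotvZr (dotvC (gs M i.-1)).
  by rewrite (gs_orth lt_pred) !mulr0 addr0 add0r expr2 mulrA.
have mu2_le : mu ^+ 2 <= 1 / 4.
  rewrite -real_normK ?num_real // expr2.
  by have := normr_ge0 mu; move: mu_le; nra.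
have := norm2_ge0 (gs M i.-1); have := norm2_ge0 (gs M i).
have : mu ^+ 2 * norm2 (gs M i.-1) <= 1 / 4 * norm2 (gs M i.-1).
  by rewrite ler_wpM2r ?norm2_ge0.
lra.
Qed.

Lemma reduced_norm2_gs0 i : (i < r)%N -> norm2 (gs M 0) <= 2 ^+ i * norm2 (gs M i).
Proof.
elim: i => [|i IH] lt_ir; first by rewrite mul1r.
apply: le_trans (IH (ltnW lt_ir)) _.
by rewrite exprSr -mulrA ler_wpM2l ?exprn_ge0 // (reduced_norm2_gs_pred (i := i.+1)).
Qed.

Lemma reduced_norm2_first_le : norm2 (colN M 0) ^+ r <= 2 ^+ 'C(r, 2) * \det M ^+ 2.
Proof.
rewrite -gs0 sqr_det_gs -bin2_sum big_mkord -prodrXr -big_split /=.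
have -> : norm2 (gs M 0) ^+ r = \prod_(i < r) norm2 (gs M 0).
  by rewrite prodr_const card_ord.
by apply: ler_prod => i _; rewrite norm2_ge0 reduced_norm2_gs0.
Qed.

End GramSchmidt.

Section Lattice.
Variables (R : realType) (r : nat).

Lemma in_lattice_col (N : 'M[R]_r) i : in_lattice N (col i N).
Proof.
exists (fun j => (j == i)%:Z); rewrite (bigD1 i) //= big1 ?addr0.
  by rewrite eqxx scale1r.
by move=> j /negbTE ->; rewrite scale0r.
Qed.

Lemma in_lattice_mulmx (M N : 'M[R]_r) : (forall i, in_lattice N (col i M)) ->
  exists Z : 'M[int]_r, M = N *m map_mx intr Z.
Proof.
move=> MN; have [z zE] := fin_all_exists MN.
exists (\matrix_(j, i) z i j); apply/matrixP => a i.
have := congr1 (fun v : 'cV[R]_r => v a 0) (zE i); rewrite !mxE summxE => ->.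
by apply: eq_bigr => j _; rewrite !mxE mulrC.
Qed.

(* Each basis is an integer combination of the other, so the two determinants
   differ by a factor [det Z] with [det Z * det W = 1] in [int]. *)
Lemma sqr_det_same_lattice (M N : 'M[R]_r) : same_lattice M N -> \det N != 0 ->
  \det M ^+ 2 = \det N ^+ 2.
Proof.
move=> MN detN0.
have [Z ZE] := in_lattice_mulmx (fun i => (MN _).1 (in_lattice_col M i)).
have [W WE] := in_lattice_mulmx (fun i => (MN _).2 (in_lattice_col N i)).
have detME : \det M = \det N * (\det Z)%:~R by rewrite {1}ZE det_mulmx det_map_mx.
have detNE : \det N = \det M * (\det W)%:~R by rewrite {1}WE det_mulmx det_map_mx.
have ZW1 : \det Z * \det W = 1.
  apply: (@intr_inj R); apply: (mulfI detN0).
  by rewrite mulr1 intrM mulrA -detME -detNE.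
have absZ1 : absz (\det Z) = 1%N.
  by move/(congr1 absz)/eqP: ZW1; rewrite abszM muln_eq1 => /andP [/eqP].
have sqrZ1 : \det Z ^+ 2 = 1.
  by rewrite -real_normK ?num_real // -abszE absZ1 expr1n.
by rewrite detME exprMn -rmorphXn /= sqrZ1 mulr1.
Qed.

End Lattice.

Lemma dist_int_le_dist (R : realType) (x : R) (p : int) : dist_int x <= `|x - p%:~R|.
Proof.
rewrite /dist_int ge_min; have := ler_norm (x - p%:~R).
have := ler_norm (- (x - p%:~R)); rewrite normrN.
have [le_px|lt_xp] := lerP p%:~R x.
  have : p%:~R <= (Num.floor x)%:~R :> R by rewrite ler_int floor_ge_int.
  by move=> *; apply/orP; left; lra.
have : (Num.ceil x)%:~R <= p%:~R :> R by rewrite ler_int ceil_le_int ltW.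
by move=> *; apply/orP; right; lra.
Qed.

Lemma natr_bin2 (F : numFieldType) r : 'C(r, 2)%:R = r%:R * (r%:R - 1) / 2 :> F.
Proof.
elim: r => [|r IH]; first by rewrite mul0r mul0r.
by rewrite binS bin1 natrD IH -addn1 natrD; field.
Qed.

Section ILLLParameters.
Variables (R : realType) (m n k : nat).
Hypothesis m_gt0 : (0 < m)%N.

Lemma det_BILLL (A : 'M[R]_(n, m)) c : \det (BILLL A c) = c ^+ m.
Proof. by rewrite /BILLL det_ublock det1 det_scalar mul1r. Qed.

Let e : R := (- ((m + n + 3)%:R / 4) - k%:R + 1) * ((m + n)%:R / m%:R).

Let cILLLE : cILLL R m n k = powR 2 e.
Proof. by rewrite /cILLL /e -powRrM. Qed.

Lemma cILLL_gt0 : 0 < cILLL R m n k.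
Proof. by rewrite cILLLE powR_gt0. Qed.

Let m_neq0 : m%:R != 0 :> R.
Proof. by rewrite pnatr_eq0 -lt0n. Qed.

Lemma ILLL_volume_bound :
  2 ^+ 'C(n + m, 2) * (cILLL R m n k ^+ m) ^+ 2 = (powR 2 (- k%:R) ^+ 2) ^+ (n + m).
Proof.
rewrite -!exprM cILLLE -!powR_mulrn ?powR_ge0 // -!powRrM.
rewrite -powRD; last by rewrite pnatr_eq0 implybT.
by congr powR; rewrite /e natr_bin2 !natrM !natrD; field.
Qed.

Lemma ILLL_coef_bound :
  powR 2 (- k%:R) / cILLL R m n k =
  powR 2 (((m + n - 1) * (m + n))%:R / (4 * m%:R)) * powR 2 ((k * n)%:R / m%:R).
Proof.
rewrite cILLLE -powRN -!powRD ?pnatr_eq0 ?implybT //; congr powR.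
by rewrite /e !natrM natrB ?addn_gt0 ?m_gt0 // !natrD; field.
Qed.

End ILLLParameters.

Theorem lemma3 (R : realType) (m n : nat) (A : 'M[R]_(n, m)) (qmax : R)
  (hm : (0 < m)%N) (hn : (0 < n)%N) (hq : 1 < qmax)
  (k : nat) (hk1 : (1 <= k)%N) (hk2 : (k%:Z <= kprime m n qmax)%R)
  (M : 'M[R]_(n + m))
  (hbasis : is_basis M)
  (hred : reduced M)
  (hlat : same_lattice M (BILLL A (cILLL R m n k)))
  (p : 'I_n -> int) (q : 'I_m -> int)
  (hform_top : forall i : 'I_n,
      colN M 0 (lshift m i) 0 = \sum_(j < m) (q j)%:~R * A i j - (p i)%:~R)
  (hform_bot : forall j : 'I_m,
      colN M 0 (rshift n j) 0 = cILLL R m n k * (q j)%:~R) :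
  (forall j : 'I_m,
     `|(q j)%:~R : R| <= powR 2 (((m + n - 1) * (m + n))%:R / (4 * m%:R))
                     * powR 2 ((k * n)%:R / m%:R)) /\
  (forall i : 'I_n,
     dist_int (\sum_(j < m) (q j)%:~R * A i j) <= powR 2 (- k%:R)).
Proof.
have c_gt0 := cILLL_gt0 R m n k.
have detB_neq0 : \det (BILLL A (cILLL R m n k)) != 0.
  by rewrite det_BILLL expf_neq0 ?gt_eqF.
have first_norm2 : norm2 (colN M 0) <= powR 2 (- k%:R) ^+ 2.
  have dim_gt0 : (0 < n + m)%N by rewrite addn_gt0 hn.
  rewrite -(ler_pXn2r dim_gt0) ?nnegrE ?norm2_ge0 ?exprn_ge0 ?powR_ge0 //.
  rewrite -(ILLL_volume_bound R n k hm) -(det_BILLL A (cILLL R m n k)).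
  by rewrite -(sqr_det_same_lattice hlat detB_neq0) reduced_norm2_first_le.
have coord := norm_coord_le (powR_ge0 _ _) first_norm2.
split=> [j|i].
- have := coord (rshift n j); rewrite hform_bot normrM (gtr0_norm c_gt0) => cq_le.
  by rewrite -(ILLL_coef_bound R n k hm) ler_pdivlMr // mulrC.
- apply: le_trans (dist_int_le_dist _ (p i)) _.
  by rewrite -hform_top coord.
Qed.
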